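(* Let $J\subseteq S$. The poset $\mathrm{Weak}(\mathfrak{S}_n^J(231))$, i.e. the set $\mathfrak{S}_n^J(231)$ ordered by $u\le_S v\iff\mathrm{inv}(u)\subseteq\mathrm{inv}(v)$, is a lattice.
   Context: $\mathfrak{S}_n$ is the symmetric group on $[n]$, $s_i=(i,i+1)$, $S=\{s_1,\dots,s_{n-1}\}$, one-line notation $w=w_1\cdots w_n$, $\mathrm{inv}(w)=\{(i,j):i<j,\ w_i>w_j\}$. For $J\subseteq S$, $\mathfrak{S}_n^J$ is the set of $w$ with $w_i<w_{i+1}$ whenever $s_i\in J$. Writing $J=S\setminus\{s_{j_1},\dots,s_{j_r}\}$ with $j_1<\dots<j_r$, the $J$-regions are $\{1,\dots,j_1\},\{j_1+1,\dots,j_2\},\dots,\{j_r+1,\dots,n\}$. $\mathfrak{S}_n^J(231)$ is the set of $w\in\mathfrak{S}_n^J$ admitting no indices $i<j<k$ in pairwise different $J$-regions with $w_k<w_i<w_j$ and $w_i=w_k+1$. *)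

From mathcomp Require Import all_boot all_fingroup.
Set Implicit Arguments. Unset Strict Implicit. Unset Printing Implicit Defensive.

(* Positions and values are 0-indexed: w : 'S_n, position i : 'I_n,
   value val (w i) in {0,..,n-1}.  The simple transposition s_{k+1}
   (1-indexed) is encoded by k : 'I_n.-1, acting on positions k, k+1.
   A subset J of S is thus a {set 'I_n.-1}. *)

Definition inv_set n (w : 'S_n) : {set 'I_n * 'I_n} :=
  [set p : 'I_n * 'I_n | (p.1 < p.2) && (w p.2 < w p.1)].

Definition weak_le n (u v : 'S_n) : Prop := inv_set u \subset inv_set v.

Definition in_quotient n (J : {set 'I_n.-1}) (w : 'S_n) : Prop :=
  forall (k : 'I_n.-1) (i j : 'I_n),
    k \in J -> val i = val k -> val j = (val k).+1 -> w i < w j.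

(* index of the J-region containing position p: the number of
   generators s_{k+1} not in J with k < p (0-indexed) *)
Definition region n (J : {set 'I_n.-1}) (p : 'I_n) : nat :=
  #|[set k : 'I_n.-1 | (k \notin J) && (val k < val p)]|.

Definition avoids231 n (J : {set 'I_n.-1}) (w : 'S_n) : Prop :=
  ~ exists i j k : 'I_n,
      [&& i < j, j < k,
          region J i != region J j, region J j != region J k,
          region J i != region J k,
          w k < w i, w i < w j & val (w i) == (val (w k)).+1].

Definition S231 n (J : {set 'I_n.-1}) (w : 'S_n) : Prop :=
  in_quotient J w /\ avoids231 J w.

Definition is_lattice (T : Type) (P : T -> Prop) (le : T -> T -> Prop) : Prop :=
  forall x y, P x -> P y ->
    (exists z, [/\ P z, le x z, le y z &
                 forall u, P u -> le x u -> le y u -> le z u]) /\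
    (exists z, [/\ P z, le z x, le z y &
                 forall u, P u -> le u x -> le u y -> le u z]).

From mathcomp Require Import all_boot all_fingroup zify.
From Stdlib Require Import Classical.
Set Implicit Arguments. Unset Strict Implicit. Unset Printing Implicit Defensive.

(* A subset of {(i, j) : i < j} is the inversion set of a permutation as soon
   as it is transitive and co-transitive.  The transitive closure of
   inv(u) \cup inv(v) is such a set, so it is the inversion set of the weak-order
   join z of u and v, and every inversion (i, k) of z is an inversion of u or v
   or passes through some p with i < p < k and z_k < z_p < z_i.

   Joins therefore preserve S_n^J(231).  An inversion of z at adjacent positions
   cannot pass through anything, so descents of z come from u or v.  If (i, j, k)
   is a forbidden pattern of z, then z_i = z_k + 1 leaves no room for a p, so
   (i, k) is an inversion of u, say.  Let y be the position right of j carrying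
   the largest u-value at most u_i, and x the position of the next value u_y + 1:
   x lies left of j, and since no value strictly between u_k and u_i can sit
   between positions i and k (it would also do so in z), x <= i and k <= y,
   so (x, j, y) is a forbidden pattern of u.

   Finally the identity lies in S_n^J(231) below everything, and in a finite
   poset with a least element and binary joins the meet of x and y is the join
   of all common lower bounds. *)

Lemma connect_indl (T : finType) (e : rel T) (P : T -> T -> Prop) :
    (forall x, P x x) ->
    (forall x y z, e x y -> connect e y z -> P y z -> P x z) ->
  forall x y, connect e x y -> P x y.
Proof.
move=> P_refl P_step x _ /connectP[p e_p ->].
elim: p x e_p => [|y p IHp] x //= /andP[e_xy e_p].
by apply: P_step e_xy _ (IHp y e_p); apply/connectP; exists p.
Qed.

Lemma connect_sub_preorder (T : finType) (e R : rel T) :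
  reflexive R -> transitive R -> subrel e R -> subrel (connect e) R.
Proof.
move=> R_refl R_trans eR; apply: connect_indl => // x y z /eR R_xy _.
exact: R_trans.
Qed.

Section RankPermutation.
Variables (n : nat) (lt : rel 'I_n).
Hypotheses (lt_irr : irreflexive lt) (lt_trans : transitive lt)
  (lt_total : forall i j, i != j -> lt i j || lt j i).

Lemma order_rank_lt_n (i : 'I_n) : #|[set x | lt x i]| < n.
Proof.
rewrite -[n in _ < n]card_ord -cardsT; apply: proper_card; apply/properP.
by split; [exact: subsetT | exists i; rewrite ?inE ?lt_irr].
Qed.

Definition order_rank (i : 'I_n) : 'I_n := Ordinal (order_rank_lt_n i).

Lemma order_rank_lt_mono i j : lt i j -> order_rank i < order_rank j.
Proof.
move=> lt_ij; apply: proper_card; apply/properP; split.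
  by apply/subsetP => x; rewrite !inE => /lt_trans; apply.
by exists i; rewrite !inE ?lt_irr.
Qed.

Lemma order_rank_inj : injective order_rank.
Proof.
move=> i j eq_ij; apply/eqP/negPn/negP => /lt_total/orP[]/order_rank_lt_mono;
  by rewrite eq_ij ltnn.
Qed.

Definition rank_perm : 'S_n := perm order_rank_inj.

Lemma rank_perm_ltE i j : (rank_perm i < rank_perm j) = lt i j.
Proof.
rewrite !permE; apply/idP/idP => [lt_rij|]; last exact: order_rank_lt_mono.
have [eq_ij|/lt_total/orP[]//] := eqVneq i j; first by rewrite eq_ij ltnn in lt_rij.
by move/order_rank_lt_mono/(ltn_trans lt_rij); rewrite ltnn.
Qed.

End RankPermutation.

Section InversionSets.
Variables (n : nat) (t : rel 'I_n).
Hypotheses (t_lt : forall i j, t i j -> i < j) (t_trans : transitive t)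
  (t_cotrans : forall a b c : 'I_n, a < b -> b < c -> t a c -> t a b || t b c).

(* [placed_below i j] is [z i < z j] for the permutation [z] to be built. *)
Definition placed_below (i j : 'I_n) : bool := if i < j then ~~ t i j else t j i.

Let t_irr : irreflexive t.
Proof. by move=> i; apply/negP => /t_lt; rewrite ltnn. Qed.

Lemma placed_below_irr : irreflexive placed_below.
Proof. by move=> i; rewrite /placed_below ltnn t_irr. Qed.

Lemma placed_below_total i j : i != j -> placed_below i j || placed_below j i.
Proof.
by rewrite /placed_below; case: ltngtP => [_|_|/val_inj->]; rewrite ?orNb ?orbN ?eqxx.
Qed.

Lemma placed_below_trans : transitive placed_below.
Proof.
move=> b a c; rewrite /placed_below.
case: (ltngtP a b) => [ab|ba|/val_inj<-]; last by rewrite t_irr.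
- case: (ltngtP b c) => [bc|cb|/val_inj<-]; last by rewrite t_irr.
  + move=> /negbTE t_ab /negbTE t_bc; rewrite (ltn_trans ab bc).
    by apply/negP => /(t_cotrans ab bc); rewrite t_ab t_bc.
  + move=> /negbTE t_ab t_cb; case: ltngtP => [ac|ca|/val_inj eq_ac].
    * by apply: contraFN t_ab => /t_trans; apply.
    * by move: (t_cotrans ca ab t_cb); rewrite t_ab orbF.
    * by rewrite eq_ac t_cb in t_ab.
- case: (ltngtP b c) => [bc|cb|/val_inj<-]; last by rewrite t_irr.
  + move=> t_ba /negbTE t_bc; case: ltngtP => [ac|ca|/val_inj eq_ac].
    * by apply: contraFN t_bc; apply: t_trans.
    * by move: (t_cotrans bc ca t_ba); rewrite t_bc.
    * by rewrite -eq_ac t_ba in t_bc.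
  + move=> t_ba t_cb; rewrite ltnNge ltnW ?(ltn_trans cb ba) //.
    exact: t_trans t_ba.
Qed.

Lemma perm_of_inversions : exists z : 'S_n, forall i j : 'I_n, i < j -> (z j < z i) = t i j.
Proof.
exists (rank_perm placed_below_irr placed_below_trans placed_below_total).
by move=> i j lt_ij; rewrite rank_perm_ltE /placed_below ltnNge ltnW.
Qed.

End InversionSets.

Section FiniteJoinSemilattice.
Variables (T : finType) (P : T -> Prop) (le : T -> T -> Prop) (bot : T).
Hypotheses (le_trans : forall x y z, le x y -> le y z -> le x z)
  (P_bot : P bot) (bot_le : forall x, P x -> le bot x)
  (P_join : forall x y, P x -> P y -> exists z,
     [/\ P z, le x z, le y z & forall w, P w -> le x w -> le y w -> le z w]).

Lemma exists_lub_seq (Q : T -> Prop) (s : seq T) : (forall x, Q x -> P x) ->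
  exists z, [/\ P z, forall x, x \in s -> Q x -> le x z &
    forall w, P w -> (forall x, x \in s -> Q x -> le x w) -> le z w].
Proof.
move=> QP; elim: s => [|a s [z' [P_z' ub_z' lub_z']]].
  by exists bot; split=> // w P_w _; apply: bot_le.
have [Q_a|nQ_a] := classic (Q a); last first.
  exists z'; split=> // [x|w P_w ub_w].
    by rewrite inE => /orP[/eqP-> /nQ_a|/ub_z'].
  by apply: lub_z' => // x s_x; apply: ub_w; rewrite inE s_x orbT.
have [z [P_z le_az le_z'z lub_z]] := P_join (QP a Q_a) P_z'.
exists z; split=> // [x|w P_w ub_w].
  by rewrite inE => /orP[/eqP-> //|/ub_z' ub_x /ub_x/le_trans]; apply.
apply: lub_z => //; first by apply: ub_w; rewrite ?inE ?eqxx.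
by apply: lub_z' => // x s_x; apply: ub_w; rewrite inE s_x orbT.
Qed.

Lemma finite_join_semilattice_is_lattice : is_lattice P le.
Proof.
move=> x y P_x P_y; split; first exact: P_join.
have [z [P_z ub_z lub_z]] :=
  @exists_lub_seq (fun w => [/\ P w, le w x & le w y]) (enum T) (fun _ '(And3 P_w _ _) => P_w).
exists z; split=> //.
- by apply: lub_z => // w _ [].
- by apply: lub_z => // w _ [].
- by move=> w P_w le_wx le_wy; apply: ub_z; rewrite ?mem_enum.
Qed.

End FiniteJoinSemilattice.

Lemma weak_leP n (u v : 'S_n) :
  weak_le u v <-> forall i j : 'I_n, i < j -> u j < u i -> v j < v i.
Proof.
split=> [/subsetP le_uv i j lt_ij inv_ij|le_uv]; last apply/subsetP => -[i j].
  have /le_uv : (i, j) \in inv_set u by rewrite inE /= lt_ij inv_ij.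
  by rewrite inE /= => /andP[].
by rewrite !inE /= => /andP[lt_ij /(le_uv _ _ lt_ij)->]; rewrite lt_ij.
Qed.

Lemma perm_val_eq n (w : 'S_n) (p q : 'I_n) : (w p == w q :> nat) = (p == q :> nat).
Proof. by rewrite !val_eqE (inj_eq perm_inj). Qed.

Lemma perm_ltgt n (w : 'S_n) (i j : 'I_n) : i != j -> (w i < w j) || (w j < w i).
Proof. by rewrite -neq_ltn perm_val_eq. Qed.

Section WeakOrderJoin.
Variables (n : nat) (u v : 'S_n).

Definition inv_union (i j : 'I_n) : bool := (i < j) && ((u j < u i) || (v j < v i)).

Definition inv_closure (i j : 'I_n) : bool := (i < j) && connect inv_union i j.

Lemma inv_union_cotrans (a b c : 'I_n) :
  a < b -> b < c -> inv_union a c -> inv_union a b || inv_union b c.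
Proof.
rewrite /inv_union => ab bc /andP[_ inv_ac]; rewrite ab bc /=.
have /perm_ltgt ltgt_ab : a != b by rewrite neq_ltn ab.
move: (ltgt_ab u) (ltgt_ab v); lia.
Qed.

Lemma inv_union_lt i j : inv_union i j -> i < j.
Proof. by case/andP. Qed.

Lemma connect_inv_union_leq i j : connect inv_union i j -> i <= j.
Proof.
apply: (connect_sub_preorder (R := fun i j : 'I_n => i <= j)) => //.
  exact: leq_trans.
by move=> x y /inv_union_lt/ltnW.
Qed.

Lemma inv_closure_lt i j : inv_closure i j -> i < j.
Proof. by case/andP. Qed.

Lemma inv_closure1 i j : inv_union i j -> inv_closure i j.
Proof. by move=> e_ij; rewrite /inv_closure (inv_union_lt e_ij) connect1. Qed.

Lemma inv_closure_trans : transitive inv_closure.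
Proof.
move=> j i k /andP[ij c_ij] /andP[jk c_jk].
by rewrite /inv_closure (ltn_trans ij jk) (connect_trans c_ij c_jk).
Qed.

Lemma inv_closure_cotrans (a b c : 'I_n) :
  a < b -> b < c -> inv_closure a c -> inv_closure a b || inv_closure b c.
Proof.
move=> + + /andP[_ c_ac]; move: a c c_ac b.
apply: connect_indl => [a b ab /(ltn_trans ab)|]; first by rewrite ltnn.
move=> x y z e_xy c_yz IH b xb bz; rewrite /inv_closure xb bz /=.
case: (ltngtP b y) => [lt_by|lt_yb|/val_inj eq_by].
- case/orP: (inv_union_cotrans xb lt_by e_xy) => /connect1; first by move->.
  by move/connect_trans/(_ c_yz)->; rewrite orbT.
- case/orP: (IH b lt_yb bz) => /andP[_ c]; last by rewrite c orbT.
  by rewrite (connect_trans (connect1 e_xy) c).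
- by rewrite eq_by connect1.
Qed.

Lemma inv_closure_split i k :
  inv_closure i k -> inv_union i k \/ exists p, inv_closure i p && inv_closure p k.
Proof.
case/andP=> + c_ik; move: i k c_ik; apply: connect_indl => [i /[!ltnn]//|].
move=> i p k e_ip c_pk _ ik; have [eq_pk|ne_pk] := eqVneq p k.
  by left; rewrite -eq_pk.
right; exists p; rewrite inv_closure1 //= /inv_closure c_pk andbT.
by rewrite ltn_neqAle val_eqE ne_pk connect_inv_union_leq.
Qed.

Lemma inv_closure_weak_le (w : 'S_n) :
  weak_le u w -> weak_le v w -> forall i j, inv_closure i j -> w j < w i.
Proof.
move=> /weak_leP le_uw /weak_leP le_vw i j /andP[ij c_ij].
have le_ji : w j <= w i.
  apply: (connect_sub_preorder (R := fun i j : 'I_n => w j <= w i)) c_ij => //.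
  - by move=> y x z /= le_yx /leq_trans; apply.
  - by move=> x y /andP[xy /orP[/(le_uw _ _ xy)|/(le_vw _ _ xy)]] /ltnW.
by rewrite ltn_neqAle le_ji andbT perm_val_eq neq_ltn ij orbT.
Qed.

End WeakOrderJoin.

Definition inv_generated n (u v z : 'S_n) : Prop :=
  forall i k : 'I_n, i < k -> z k < z i ->
    (u k < u i \/ v k < v i) \/ exists2 p : 'I_n, i < p < k & z k < z p < z i.

Lemma weak_join_exists n (u v : 'S_n) :
  exists z : 'S_n, [/\ weak_le u z, weak_le v z,
    forall w, weak_le u w -> weak_le v w -> weak_le z w & inv_generated u v z].
Proof.
have [z z_inv] := perm_of_inversions (@inv_closure_lt n u v) (@inv_closure_trans n u v)
  (@inv_closure_cotrans n u v).
have inv_z (i j : 'I_n) : i < j -> z j < z i -> inv_closure u v i j.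
  by move=> ij; rewrite z_inv.
have z_inv_union (i j : 'I_n) : inv_union u v i j -> z j < z i.
  by move=> e_ij; rewrite z_inv ?inv_closure1 ?(inv_union_lt e_ij).
exists z; split.
- by apply/weak_leP => i j ij inv_ij; apply: z_inv_union; rewrite /inv_union ij inv_ij.
- by apply/weak_leP => i j ij inv_ij; apply: z_inv_union; rewrite /inv_union ij inv_ij orbT.
- move=> w le_uw le_vw; apply/weak_leP => i j ij /(inv_z _ _ ij).
  exact: inv_closure_weak_le.
move=> i k ik /(inv_z _ _ ik)/inv_closure_split[/andP[_ inv_ik]|[p /andP[ip pk]]].
  by left; apply/orP.
have /inv_closure_lt lt_ip := ip; have /inv_closure_lt lt_pk := pk.
by right; exists p; rewrite ?lt_ip // z_inv // pk z_inv.
Qed.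

Lemma region_mono n (J : {set 'I_n.-1}) (a b : 'I_n) : a <= b -> region J a <= region J b.
Proof.
move=> ab; apply/subset_leq_card/subsetP => k; rewrite !inE => /andP[-> ka].
exact: leq_trans ka ab.
Qed.

(* [avoids231 J w] is convertible to [~ exists i j k, pattern231 J w i j k]. *)
Definition pattern231 n (J : {set 'I_n.-1}) (w : 'S_n) (i j k : 'I_n) : bool :=
  [&& i < j, j < k, region J i != region J j, region J j != region J k,
      region J i != region J k, w k < w i, w i < w j & w i == (w k).+1 :> nat].

Lemma pattern231_weak_le n (J : {set 'I_n.-1}) (w z : 'S_n) (i j k : 'I_n) :
  weak_le w z -> pattern231 J z i j k -> w k < w i -> exists x y, pattern231 J w x j y.
Proof.
move=> /weak_leP le_wz /and5P[ij jk rij rjk /and4P[_ zki zij /eqP zik]] wki.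
have ne_ij : i != j by rewrite neq_ltn ij.
have wij : w i < w j.
  by case/orP: (perm_ltgt w ne_ij) => // /(le_wz _ _ ij); rewrite ltnNge ltnW.
have no_between (p : 'I_n) : i < p -> p < k -> w k < w p -> w p < w i -> False.
  by move=> ip pk /(le_wz _ _ pk) zkp /(le_wz _ _ ip) zpi; lia.
pose right_of_j := [pred y : 'I_n | (j < y) && (w y <= w i)].
have k_right : right_of_j k by rewrite /= jk ltnW.
have [y /andP[jy wyi] y_max] := arg_maxnP (fun y => w y) k_right.
have wky : w k <= w y := y_max k k_right.
have wyi_lt : w y < w i.
  by rewrite ltn_neqAle wyi perm_val_eq neq_ltn (ltn_trans ij jy) orbT.
have wy1_lt_n : (w y).+1 < n by have := ltn_ord (w i); lia.
pose x := (w^-1)%g (Ordinal wy1_lt_n).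
have wx : w x = (w y).+1 :> nat by rewrite permKV.
have xj : x < j.
  case: ltngtP => // [jx|/val_inj eq_xj]; last by move: wx; rewrite eq_xj; lia.
  by have := y_max x; rewrite /= jx wx; lia.
have xi : x <= i.
  rewrite leqNgt; apply/negP => ix; apply: (no_between x ix (ltn_trans xj jk)); first lia.
  by rewrite ltn_neqAle perm_val_eq neq_ltn ix orbT /=; lia.
have ky : k <= y.
  rewrite leqNgt; apply/negP => yk; apply: (no_between y (ltn_trans ij jy) yk) => //.
  by rewrite ltn_neqAle perm_val_eq neq_ltn yk orbT wky.
have := region_mono J xi; have := region_mono J (ltnW ij).
have := region_mono J (ltnW jk); have := region_mono J ky.
by exists x, y; rewrite /pattern231 xj jy wx; lia.
Qed.

Section GeneratedInversions.
Variables (n : nat) (J : {set 'I_n.-1}) (u v z : 'S_n).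
Hypothesis z_gen : inv_generated u v z.

Lemma in_quotient_generated : in_quotient J u -> in_quotient J v -> in_quotient J z.
Proof.
move=> qu qv k i j kJ ik jk; have ij : i < j by rewrite ik jk.
have ne_ij : i != j by rewrite neq_ltn ij.
case/orP: (perm_ltgt z ne_ij) => // /(z_gen ij) [[]|[p /andP[ip pj] _]].
- by have := qu k i j kJ ik jk; rewrite ltnNge => /negP + /ltnW.
- by have := qv k i j kJ ik jk; rewrite ltnNge => /negP + /ltnW.
- by move: ip pj; rewrite ik jk; lia.
Qed.

Hypotheses (le_uz : weak_le u z) (le_vz : weak_le v z).

Lemma avoids231_generated : avoids231 J u -> avoids231 J v -> avoids231 J z.
Proof.
move=> au av [i [j [k pat]]].
have /and5P[ij jk _ _ /and4P[_ zki _ /eqP zik]] : pattern231 J z i j k := pat.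
case: (z_gen (ltn_trans ij jk) zki) => [[wki|wki]|[p _ /andP[]]]; last by lia.
- by have [x [y pat_u]] := pattern231_weak_le le_uz pat wki; apply: au; exists x, j, y.
- by have [x [y pat_v]] := pattern231_weak_le le_vz pat wki; apply: av; exists x, j, y.
Qed.

End GeneratedInversions.

Lemma S231_join n (J : {set 'I_n.-1}) (x y : 'S_n) :
  S231 J x -> S231 J y -> exists z, [/\ S231 J z, weak_le x z, weak_le y z &
    forall w, S231 J w -> weak_le x w -> weak_le y w -> weak_le z w].
Proof.
move=> [qx ax] [qy ay]; have [z [le_xz le_yz lub_z z_gen]] := weak_join_exists x y.
exists z; split=> // [|w _]; last exact: lub_z.
split; first exact: in_quotient_generated z_gen qx qy.
exact: avoids231_generated z_gen le_xz le_yz ax ay.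
Qed.

Lemma S231_1 n (J : {set 'I_n.-1}) : S231 J 1%g.
Proof.
split=> [k i j _ ik jk|[i [j [k /and5P[ij jk _ _ /and4P[_ ki _ _]]]]]].
  by rewrite !perm1 ik jk.
by move: ki; rewrite !perm1; lia.
Qed.

Lemma weak_1le n (w : 'S_n) : weak_le 1%g w.
Proof. by apply/weak_leP => i j ij; rewrite !perm1 ltnNge ltnW. Qed.

Theorem proposition3p10 (n : nat) (J : {set 'I_n.-1}) :
  is_lattice (@S231 n J) (@weak_le n).
Proof.
apply: (finite_join_semilattice_is_lattice (bot := 1%g)).
- by move=> u v w; apply: subset_trans.
- exact: S231_1.
- by move=> w _; apply: weak_1le.
- exact: S231_join.
Qed.
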